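(* There exists an absolute constant $c>0$ such that the following holds. Let $r$ be a positive integer and let $M\in\{0,1\}^{n\times n}$ with $\operatorname{rank}(M)\leq r$ and $d=|M|/n\leq n/2$. Then $$\operatorname{pdisc}(M)\geq c\cdot\min\left\{dn,\frac{d^{1/2}n^{3/2}}{\sqrt r}\right\}.$$
   Context: $|M|$ is the number of $1$ entries of $M$; let $N=2n$ and $p=|M|/n^2$. The symmetrization of $M$ is the symmetric matrix $A\in\mathbb{R}^{N\times N}$ with $A_{i,j+n}=A_{j+n,i}=M_{i,j}$ and all other entries $0$. $L\in\mathbb{R}^{N\times N}$ is the adjacency matrix of the complete bipartite graph with parts $[n]$ and $[n+1,N]$. For $X\in\mathbb{R}^{N\times N}$, $\operatorname{disc}(X)=\langle X,A\rangle-p\langle X,L\rangle$ (entrywise inner product), and $\operatorname{pdisc}(M)=\max\{\operatorname{disc}(X): X\text{ symmetric positive semidefinite},\ X_{i,i}\leq1\ \forall i\}$. *)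

From HB Require Import structures.
From mathcomp Require Import all_boot all_order all_algebra.
From mathcomp Require Import boolp classical_sets reals.
Set Implicit Arguments. Unset Strict Implicit. Unset Printing Implicit Defensive.
Import Order.TTheory GRing.Theory Num.Theory.
Local Open Scope ring_scope.
Local Open Scope classical_set_scope.

Section Defs.
Variable R : realType.

(* |M| : number of 1 entries of a 0/1 matrix = sum of its entries *)
Definition mass n (M : 'M[R]_n) : R := \sum_(i < n) \sum_(j < n) M i j.

Definition density n (M : 'M[R]_n) : R := mass M / (n%:R ^+ 2).

Definition symmetrization n (M : 'M[R]_n) : 'M[R]_(n + n) :=
  block_mx 0 M M^T 0.

Definition Kbip n : 'M[R]_(n + n) :=
  block_mx 0 (const_mx 1) (const_mx 1) 0.

Definition frob m (X Y : 'M[R]_m) : R := \sum_(i < m) \sum_(j < m) X i j * Y i j.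

Definition disc n (M : 'M[R]_n) (X : 'M[R]_(n + n)) : R :=
  frob X (symmetrization M) - density M * frob X (Kbip n).

Definition psd m (X : 'M[R]_m) : Prop :=
  X^T = X /\ forall v : 'cV[R]_m, 0 <= (v^T *m X *m v) 0 0.

Definition pdisc n (M : 'M[R]_n) : R :=
  sup [set disc M X | X in [set X : 'M[R]_(n + n) | psd X /\ forall i, X i i <= 1]].

End Defs.

From HB Require Import structures.
From mathcomp Require Import all_boot all_order all_algebra.
From mathcomp Require Import boolp classical_sets reals.
From mathcomp Require Import ring lra.
Set Implicit Arguments. Unset Strict Implicit. Unset Printing Implicit Defensive.
Import Order.TTheory GRing.Theory Num.Theory.
Local Open Scope ring_scope.

(* Let B = M - pJ, so that disc M X = <X, [0 B; B^T 0]>.  Taking for X the Gram matrix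
   of vectors u_1..u_n, v_1..v_n of norm at most 1 gives
   pdisc M >= 2 sum_ij B_ij <u_i, v_j>.
   With 0/1 cut vectors, the rows (and the columns) of degree at least 2d have total
   mass at most pdisc M.  For the other ones, let P be the orthogonal projector onto
   the row space of B, whose trace rank B is at most r + 1, and take u_i = B_i / |B_i|
   and v_j = lam P_j with lam = sqrt n / (4 sqrt r).  As BP = B, the (i, j) term is
   lam B_ij^2 / |B_i| >= lam / (8 sqrt d) at each one in a light row i.  Since
   |v_j|^2 = lam^2 P_jj and sum_j P_jj <= 2r, v_j = 0 has to be taken only on n/8
   "spiky" columns, whose light part carries mass at most dn/4.  So either heavy lines
   carry mass dn/4, or pdisc M >= (dn/4) lam / (4 sqrt d). *)

Lemma min_divr_le (R : realFieldType) (x y k : R) : 0 <= x -> 1 <= k ->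
  Num.min x y / k <= Num.min x (y / k).
Proof.
move=> x_ge0 k_ge1; have k_gt0 : 0 < k by lra.
rewrite le_min ler_pM2r ?invr_gt0 // ge_min lexx orbT andbT ler_pdivrMr //.
have : Num.min x y <= x by rewrite ge_min lexx.
nra.
Qed.

Section Projector.
Variable R : realFieldType.

Lemma mulmx_trmx_diag m n (A : 'M[R]_(m, n)) i :
  (A *m A^T) i i = \sum_l A i l ^+ 2.
Proof. by rewrite mxE; apply: eq_bigr => l _; rewrite mxE expr2. Qed.

Lemma gram_unit m n (V : 'M[R]_(m, n)) : row_free V -> V *m V^T \in unitmx.
Proof.
move=> freeV; rewrite -row_free_unit; apply: inj_row_free => x xVV0.
apply/eqP; rewrite -(mulmx_free_eq0 _ freeV); apply/eqP/rowP => l.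
set y := x *m V.
have : (y *m y^T) 0 0 = 0 by rewrite trmx_mul mulmxA -(mulmxA x) xVV0 mul0mx mxE.
rewrite mulmx_trmx_diag => /eqP; rewrite psumr_eq0 => [|l' _]; last exact: sqr_ge0.
by move=> /allP/(_ l (mem_index_enum l)); rewrite sqrf_eq0 [RHS]mxE => /eqP.
Qed.

Lemma row_space_projector m n (A : 'M[R]_(m, n)) : exists P : 'M[R]_n,
  [/\ P^T = P, P *m P = P, \tr P = (\rank A)%:R & A *m P = A].
Proof.
have sAV : (A <= row_base A)%MS by rewrite eq_row_base.
move: (row_base A) (row_base_free A) sAV => V freeV sAV.
pose G := V *m V^T; have Gu : G \in unitmx by exact: gram_unit.
pose P := V^T *m invmx G *m V.
have VP : V *m P = V by rewrite /P !mulmxA -/G (mulmxV Gu) mul1mx.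
exists P; split.
- by rewrite /P !trmx_mul trmxK trmx_inv /G trmx_mul trmxK mulmxA.
- by rewrite {1}/P -!mulmxA VP mulmxA.
- by rewrite /P mxtrace_mulC mulmxA -/G (mulmxV Gu) mxtrace1.
- by case/submxP: sAV => D ->; rewrite -mulmxA VP.
Qed.

End Projector.

Lemma mxrank_sub_const (F : fieldType) n (A : 'M[F]_n) c :
  (\rank (A - c *: const_mx 1)%R <= (\rank A).+1)%N.
Proof.
rewrite -addn1 (leq_trans (mxrank_add _ _)) // leq_add2l mxrank_opp.
rewrite (leq_trans (mxrank_scale _ _)) //.
have -> : const_mx 1 = (const_mx 1 : 'cV[F]_n) *m (const_mx 1 : 'rV[F]_n).
  by apply/matrixP => i j; rewrite !mxE big_ord1 !mxE mulr1.
exact: leq_trans (mxrankM_maxl _ _) (rank_leq_col _).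
Qed.

Section DiagonalScaling.
Variable R : pzRingType.

Lemma diag_mulmx_diag_entry n (a b : 'rV[R]_n) (A : 'M[R]_n) i j :
  (diag_mx a *m A *m diag_mx b) i j = a 0 i * A i j * b 0 j.
Proof. by rewrite mul_diag_mx mul_mx_diag !mxE. Qed.

End DiagonalScaling.

Section Discrepancy.
Variable R : realType.

Definition centered n (M : 'M[R]_n) : 'M[R]_n := M - density M *: const_mx 1.

Lemma frob0l m (Y : 'M[R]_m) : frob 0 Y = 0.
Proof. by rewrite /frob big1 // => i _; rewrite big1 // => j _; rewrite mxE mul0r. Qed.

Lemma frob0r m (X : 'M[R]_m) : frob X 0 = 0.
Proof. by rewrite /frob big1 // => i _; rewrite big1 // => j _; rewrite mxE mulr0. Qed.

Lemma frob_trmx m (X Y : 'M[R]_m) : frob X^T Y^T = frob X Y.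
Proof.
by rewrite /frob exchange_big; apply: eq_bigr => i _; apply: eq_bigr => j _; rewrite !mxE.
Qed.

Lemma frob_block_mx n (A1 B1 C1 D1 A2 B2 C2 D2 : 'M[R]_n) :
  frob (block_mx A1 B1 C1 D1) (block_mx A2 B2 C2 D2) =
  frob A1 A2 + frob B1 B2 + frob C1 C2 + frob D1 D2.
Proof.
rewrite /frob big_split_ord /=.
under eq_bigr do rewrite big_split_ord /=.
under [X in _ + X]eq_bigr do rewrite big_split_ord /=.
rewrite !big_split /= addrA.
by congr (_ + _ + _ + _); apply: eq_bigr => i _; apply: eq_bigr => j _;
  rewrite ?block_mxEul ?block_mxEur ?block_mxEdl ?block_mxEdr.
Qed.

Lemma symmetrization_sub_Kbip n (M : 'M[R]_n) :
  symmetrization M - density M *: Kbip R n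
  = block_mx 0 (centered M) (centered M)^T 0.
Proof.
rewrite /symmetrization /Kbip /centered scale_block_mx opp_block_mx add_block_mx.
rewrite !scaler0 !subr0; congr block_mx.
by apply/matrixP => i j; rewrite !mxE.
Qed.

Lemma disc_frob n (M : 'M[R]_n) X :
  disc M X = frob X (block_mx 0 (centered M) (centered M)^T 0).
Proof.
rewrite -symmetrization_sub_Kbip /disc /frob mulr_sumr -sumrB.
apply: eq_bigr => i _; rewrite mulr_sumr -sumrB; apply: eq_bigr => j _.
by rewrite !mxE; ring.
Qed.

Lemma psd_gram m n (W : 'M[R]_(m, n)) : psd (W *m W^T).
Proof.
split=> [|v]; first by rewrite trmx_mul trmxK.
have -> : v^T *m (W *m W^T) *m v = (v^T *m W) *m (v^T *m W)^T.
  by rewrite trmx_mul trmxK !mulmxA.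
by rewrite mulmx_trmx_diag sumr_ge0 // => l _; rewrite sqr_ge0.
Qed.

Lemma delta_quad_form m (X : 'M[R]_m) i j :
  (delta_mx i 0)^T *m X *m delta_mx j 0 = const_mx (X i j) :> 'M_1.
Proof.
by apply/matrixP=> a b; rewrite [a]ord1 [b]ord1 trmx_delta -rowE -colE !mxE.
Qed.

Lemma psd_norm_le1 m (X : 'M[R]_m) : psd X -> (forall i, X i i <= 1) ->
  forall i j, `|X i j| <= 1.
Proof.
move=> [XT Xpsd] Xd i j.
have Xji : X j i = X i j by rewrite -[in LHS]XT mxE.
have quad s : 0 <= X i i + 2 * s * X i j + s ^+ 2 * X j j.
  have := Xpsd (delta_mx i 0 + s *: delta_mx j 0).
  rewrite !(linearD, linearZ, mulmxDl, mulmxDr, =^~ scalemxAl, =^~ scalemxAr) /=.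
  by rewrite !delta_quad_form !mxE Xji; congr (_ <= _); ring.
have := quad 1; have := quad (-1); have := Xd i; have := Xd j.
by rewrite ler_norml; move=> *; apply/andP; split; nra.
Qed.

Lemma disc_le_pdisc n (M : 'M[R]_n) X : psd X -> (forall i, X i i <= 1) ->
  disc M X <= pdisc M.
Proof.
move=> Xpsd Xd; apply: ub_le_sup; last by exists X.
pose Y := block_mx 0 (centered M) (centered M)^T 0.
exists (\sum_i \sum_j `|Y i j|) => _ [Z [Zpsd Zd] <-].
rewrite disc_frob; apply: ler_sum => i _; apply: ler_sum => j _.
rewrite (le_trans (ler_norm _)) // normrM ler_piMl //; exact: psd_norm_le1.
Qed.

Lemma pdisc_ge_gram n m (M : 'M[R]_n) (U V : 'M[R]_(n, m)) :
  (forall i, (U *m U^T) i i <= 1) -> (forall j, (V *m V^T) j j <= 1) ->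
  2 * frob (U *m V^T) (centered M) <= pdisc M.
Proof.
move=> Ud Vd; pose W := col_mx U V.
have WWT : W *m W^T = block_mx (U *m U^T) (U *m V^T) (V *m U^T) (V *m V^T).
  by rewrite tr_col_mx mul_col_row.
have Wd a : (W *m W^T) a a <= 1.
  by rewrite WWT -(splitK a); case: split => k; rewrite ?block_mxEul ?block_mxEdr.
have <- : disc M (W *m W^T) = 2 * frob (U *m V^T) (centered M).
  rewrite disc_frob WWT frob_block_mx !frob0r addr0 add0r.
  by rewrite -[V *m U^T]trmxK trmx_mul trmxK frob_trmx mulr2n mulrDl mul1r.
exact: disc_le_pdisc (psd_gram W) Wd.
Qed.

Lemma pdisc_ge0 n (M : 'M[R]_n) : 0 <= pdisc M.
Proof.
apply: le_trans (@pdisc_ge_gram n 0 M 0 0 _ _) => [|i|i];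
  by rewrite mul0mx ?frob0l ?mulr0 ?mxE.
Qed.

End Discrepancy.

Section ZeroOneMatrix.
Variable R : realType.
Variables (n : nat) (M : 'M[R]_n).
Hypothesis M01 : forall i j, M i j = 0 \/ M i j = 1.

Local Notation p := (density M).
Local Notation d := (mass M / n%:R).
Local Notation B := (centered M).
Local Notation row_deg i := (\sum_j M i j).
Local Notation col_deg j := (\sum_i M i j).
Local Notation heavy_row i := ((2 * d <= row_deg i)%R%:R : R).
Local Notation heavy_col j := ((2 * d <= col_deg j)%R%:R : R).

Lemma entry_ge0 i j : 0 <= M i j.
Proof. by case: (M01 i j) => ->. Qed.

Lemma mass_ge0 : 0 <= mass M.
Proof.
by rewrite /mass !sumr_ge0 // => i _; rewrite sumr_ge0 // => j _; exact: entry_ge0.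
Qed.

Lemma avg_deg_ge0 : 0 <= d.
Proof. by rewrite divr_ge0 ?mass_ge0. Qed.

Lemma density_ge0 : 0 <= p.
Proof. by rewrite divr_ge0 ?mass_ge0 ?exprn_ge0. Qed.

Lemma density_mul_n : p * n%:R = d.
Proof.
rewrite /density; have [n0|n0] := eqVneq (n%:R : R) 0.
  by rewrite n0 expr0n /= invr0 !mulr0.
by field.
Qed.

Lemma avg_deg_mul_n : d * n%:R = mass M.
Proof.
have [n0|n_neq0] := eqVneq (n%:R : R) 0; last by rewrite mulfVK.
move/eqP: n0; rewrite pnatr_eq0 => /eqP n0.
have -> : n%:R = 0 :> R by rewrite n0.
rewrite mulr0 /mass big1 // => i _.
by have := ltn_ord i; rewrite {2}n0.
Qed.

Lemma centered_entry i j : B i j = M i j - p.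
Proof. by rewrite !mxE mulr1. Qed.

Lemma centered_row_sum i : \sum_j B i j = row_deg i - d.
Proof.
under eq_bigr do rewrite centered_entry.
by rewrite sumrB sumr_const card_ord -density_mul_n mulr_natr.
Qed.

Lemma centered_col_sum j : \sum_i B i j = col_deg j - d.
Proof.
under eq_bigr do rewrite centered_entry.
by rewrite sumrB sumr_const card_ord -density_mul_n mulr_natr.
Qed.

Lemma pdisc_ge_cut (x y : 'I_n -> R) :
  (forall i, x i ^+ 2 <= 1) -> (forall j, y j ^+ 2 <= 1) ->
  2 * \sum_i \sum_j x i * y j * B i j <= pdisc M.
Proof.
move=> x1 y1; pose U := \col_i x i; pose V := \col_j y j.
have UVT i j : (U *m V^T) i j = x i * y j by rewrite mxE big_ord1 !mxE.
have -> : \sum_i \sum_j x i * y j * B i j = frob (U *m V^T) B.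
  by apply: eq_bigr => i _; apply: eq_bigr => j _; rewrite UVT.
apply: pdisc_ge_gram => [i|j].
- by rewrite (mulmx_trmx_diag U) big_ord1 mxE.
- by rewrite (mulmx_trmx_diag V) big_ord1 mxE.
Qed.

Lemma heavy_rows_le_pdisc : \sum_i heavy_row i * row_deg i <= pdisc M.
Proof.
apply: le_trans (pdisc_ge_cut (x := fun i => heavy_row i) (y := fun=> 1) _ _).
- rewrite mulr_sumr; apply: ler_sum => i _ /=.
  have -> : \sum_j heavy_row i * 1 * B i j = heavy_row i * (row_deg i - d).
    by rewrite -centered_row_sum mulr_sumr; apply: eq_bigr => j _; rewrite mulr1.
  by have [heavy|_] := leP (2 * d) (row_deg i); rewrite /= ?mul1r ?mul0r //; lra.
- by move=> i; case: (2 * d <= _); rewrite ?expr1n ?expr0n.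
- by move=> j; rewrite expr1n.
Qed.

Lemma heavy_cols_le_pdisc : \sum_j heavy_col j * col_deg j <= pdisc M.
Proof.
apply: le_trans (pdisc_ge_cut (x := fun=> 1) (y := fun j => heavy_col j) _ _).
- rewrite exchange_big mulr_sumr; apply: ler_sum => j _ /=.
  have -> : \sum_i 1 * heavy_col j * B i j = heavy_col j * (col_deg j - d).
    by rewrite -centered_col_sum mulr_sumr; apply: eq_bigr => i _; rewrite mul1r.
  by have [heavy|_] := leP (2 * d) (col_deg j); rewrite /= ?mul1r ?mul0r //; lra.
- by move=> i; rewrite expr1n.
- by move=> j; case: (2 * d <= _); rewrite ?expr1n ?expr0n.
Qed.

Lemma mass_le_heavy_spiky_light (t : 'I_n -> bool) :
  mass M <= \sum_i heavy_row i * row_deg i + \sum_j heavy_col j * col_deg j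
            + 2 * d * \sum_j (t j)%:R
            + \sum_i \sum_j (1 - heavy_row i) * (1 - (t j)%:R) * M i j.
Proof.
have entry_split i j : M i j <= heavy_row i * M i j + heavy_col j * M i j
    + (t j)%:R * (1 - heavy_col j) * M i j
    + (1 - heavy_row i) * (1 - (t j)%:R) * M i j.
  have := entry_ge0 i j.
  by case: (2 * d <= row_deg i)%R; case: (2 * d <= col_deg j)%R; case: (t j) => /=; lra.
have light_col j : (t j)%:R * (1 - heavy_col j) * col_deg j <= 2 * d * (t j)%:R.
  have : 0 <= col_deg j by apply: sumr_ge0 => i _; exact: entry_ge0.
  have := avg_deg_ge0.
  by case: (t j); have [heavy|light] := leP (2 * d) (col_deg j) => /=; lra.
have E1 : \sum_i \sum_j heavy_row i * M i j = \sum_i heavy_row i * row_deg i.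
  by apply: eq_bigr => i _; rewrite mulr_sumr.
have E2 : \sum_i \sum_j heavy_col j * M i j = \sum_j heavy_col j * col_deg j.
  by rewrite exchange_big; apply: eq_bigr => j _; rewrite mulr_sumr.
have E3 : \sum_i \sum_j (t j)%:R * (1 - heavy_col j) * M i j <= 2 * d * \sum_j (t j)%:R.
  rewrite exchange_big mulr_sumr; apply: ler_sum => j _ /=.
  by rewrite -mulr_sumr; exact: light_col.
apply: le_trans (_ : \sum_i \sum_j (heavy_row i * M i j + heavy_col j * M i j
    + (t j)%:R * (1 - heavy_col j) * M i j
    + (1 - heavy_row i) * (1 - (t j)%:R) * M i j) <= _).
  by apply: ler_sum => i _; apply: ler_sum => j _; exact: entry_split.
under eq_bigr do rewrite !big_split /=.
by rewrite !big_split /= E1 E2; lra.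
Qed.

Lemma centered_row_norm i : (B *m B^T) i i = (1 - 2 * p) * row_deg i + p * d.
Proof.
have sq l : B i l ^+ 2 = (1 - 2 * p) * M i l + p ^+ 2.
  by rewrite centered_entry; case: (M01 i l) => ->; ring.
rewrite mulmx_trmx_diag (eq_bigr _ (fun l _ => sq l)) big_split /= -mulr_sumr.
by rewrite sumr_const card_ord -density_mul_n mulr_natr; ring.
Qed.

Hypothesis p_le_half : p <= 1 / 2.

Lemma light_row_weight i j : row_deg i < 2 * d -> M i j = 1 ->
  1 / (8 * Num.sqrt d) <= (1 - p) ^+ 2 / Num.sqrt ((B *m B^T) i i).
Proof.
move=> light Mij; set S := (B *m B^T) i i.
have p0 := density_ge0; have d0 := avg_deg_ge0.
have p_gap : 0 <= 1 - 2 * p by move: p_le_half; lra.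
have S_le : S <= 4 * d.
  rewrite /S centered_row_norm.
  have deg_gap : 0 <= 2 * d - row_deg i by lra.
  have := mulr_ge0 p_gap deg_gap; nra.
have S_ge : (1 - p) ^+ 2 <= S.
  rewrite /S mulmx_trmx_diag (bigD1 j) //= centered_entry Mij lerDl.
  by rewrite sumr_ge0 // => l _; rewrite sqr_ge0.
have q_ge : 1 / 4 <= (1 - p) ^+ 2 by rewrite expr2; nra.
have sS_gt0 : 0 < Num.sqrt S by rewrite sqrtr_gt0; lra.
have sS_le : Num.sqrt S <= 2 * Num.sqrt d.
  have -> : 2 * Num.sqrt d = Num.sqrt (4 * d).
    have -> : 4 = 2 ^+ 2 :> R by rewrite expr2 -natrM.
    by rewrite [RHS]sqrtrM ?sqr_ge0 // sqrtr_sqr ger0_norm.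
  by rewrite ler_sqrt //; lra.
rewrite ler_pdivlMr // mulrC mulrA ler_pdivrMr ?mulr_gt0 //; first nra.
lra.
Qed.

Section Projection.
Variable P : 'M[R]_n.
Hypotheses (P_sym : P^T = P) (P_idem : P *m P = P) (P_fixes_centered : B *m P = B).
Variable lam : R.
Hypothesis lam_ge0 : 0 <= lam.

Local Notation spiky j := ((1 < lam ^+ 2 * P j j)%R%:R : R).

Lemma spiky_count : \sum_j spiky j <= lam ^+ 2 * \tr P.
Proof.
rewrite /mxtrace mulr_sumr; apply: ler_sum => j _.
have P_jj_ge0 : 0 <= P j j.
  have -> : P j j = (P *m P^T) j j by rewrite P_sym P_idem.
  by rewrite mulmx_trmx_diag sumr_ge0 // => l _; rewrite sqr_ge0.
have [spiky_j|_] := ltP 1 (lam ^+ 2 * P j j); last by rewrite mulr_ge0 ?sqr_ge0.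
exact: ltW.
Qed.

Lemma light_entry_le i j :
  (1 - heavy_row i) * (1 - spiky j) * M i j * (lam / (8 * Num.sqrt d))
  <= (Num.sqrt ((B *m B^T) i i))^-1 * B i j * ((1 - spiky j) * lam) * B i j.
Proof.
set s := Num.sqrt ((B *m B^T) i i).
have rhs_ge0 : 0 <= s^-1 * B i j * ((1 - spiky j) * lam) * B i j.
  rewrite mulrAC; apply: mulr_ge0.
    by rewrite -mulrA -expr2 mulr_ge0 ?invr_ge0 ?sqrtr_ge0 ?sqr_ge0.
  by case: (1 < _)%R; rewrite /= ?subrr ?mul0r ?subr0 ?mul1r.
have [heavy|light] := leP (2 * d) (row_deg i).
  by rewrite /= subrr !mul0r; exact: rhs_ge0.
case: (M01 i j) => Mij; first by rewrite Mij mulr0 mul0r; exact: rhs_ge0.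
have [spiky_j|not_spiky] := ltP 1 (lam ^+ 2 * P j j).
  by rewrite /= subrr !(mul0r, mulr0).
have := light_row_weight light Mij; rewrite centered_entry Mij /= !subr0 !mul1r.
rewrite (_ : s^-1 * (1 - p) * lam * (1 - p) = lam * ((1 - p) ^+ 2 / s)).
  exact: ler_wpM2l.
by ring.
Qed.

Lemma light_mass_le_pdisc :
  (\sum_i \sum_j (1 - heavy_row i) * (1 - spiky j) * M i j) * lam / (4 * Num.sqrt d)
  <= pdisc M.
Proof.
(* a zero row B_i gets weight (sqrt 0)^-1 = 0 *)
pose a := \row_i (Num.sqrt ((B *m B^T) i i))^-1.
pose w := \row_j ((1 - spiky j) * lam).
pose U := diag_mx a *m B; pose V := diag_mx w *m P.
have UUT : U *m U^T = diag_mx a *m (B *m B^T) *m diag_mx a.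
  by rewrite trmx_mul tr_diag_mx !mulmxA.
have VVT : V *m V^T = diag_mx w *m P *m diag_mx w.
  by rewrite trmx_mul tr_diag_mx P_sym !mulmxA -(mulmxA (diag_mx w) P P) P_idem.
have UVT : U *m V^T = diag_mx a *m B *m diag_mx w.
  by rewrite trmx_mul tr_diag_mx P_sym !mulmxA -(mulmxA (diag_mx a) B P) P_fixes_centered.
apply: le_trans (pdisc_ge_gram M (U := U) (V := V) _ _) => [|i|j].
- set N := \sum_i _; set c := lam / (8 * Num.sqrt d).
  have -> : N * lam / (4 * Num.sqrt d) = 2 * (N * c).
    rewrite /c; have [->|sd_neq0] := eqVneq (Num.sqrt d) 0.
      by rewrite !mulr0 invr0 !mulr0.
    by field.
  rewrite ler_pM2l // /N mulr_suml; apply: ler_sum => i _.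
  rewrite mulr_suml; apply: ler_sum => j _.
  by rewrite UVT diag_mulmx_diag_entry [a 0 i]mxE [w 0 j]mxE; exact: light_entry_le.
- rewrite UUT diag_mulmx_diag_entry [a 0 i]mxE mulrAC -expr2 exprVn sqr_sqrtr.
    by have [->|S_neq0] := eqVneq ((B *m B^T) i i) 0; rewrite ?invr0 ?mul0r ?mulVf.
  by rewrite mulmx_trmx_diag sumr_ge0 // => l _; rewrite sqr_ge0.
- rewrite VVT diag_mulmx_diag_entry [w 0 j]mxE.
  have [_|not_spiky] := ltP 1 (lam ^+ 2 * P j j); first by rewrite /= subrr !mul0r.
  by rewrite /= subr0 !mul1r mulrAC -expr2.
Qed.

Lemma pdisc_ge_heavy_or_light : \sum_j spiky j <= n%:R / 8 ->
  Num.min (d * n%:R) (d * n%:R * lam / (4 * Num.sqrt d)) / 4 <= pdisc M.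
Proof.
move=> few_spiky.
have heavy_r := heavy_rows_le_pdisc; have heavy_c := heavy_cols_le_pdisc.
have light := light_mass_le_pdisc.
have split := mass_le_heavy_spiky_light (fun j => 1 < lam ^+ 2 * P j j)%R.
set a := \sum_i (_ * _) in heavy_r split.
set b := \sum_j (_ * _) in heavy_c split.
set T := \sum_j _ in few_spiky split.
set N := \sum_i \sum_j _ in split light.
have mass_x := avg_deg_mul_n.
set x := d * n%:R in mass_x *; set y := x * lam / (4 * Num.sqrt d).
have min_le_x : Num.min x y <= x by rewrite ge_min lexx.
have min_le_y : Num.min x y <= y by rewrite ge_min lexx orbT.
have spiky_mass : 2 * d * T <= x / 4.
  by have := ler_wpM2l (mulr_ge0 (ler0n R 2) avg_deg_ge0) few_spiky; rewrite /x; lra.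
have [a_big|a_small] := lerP (x / 4) a; first by apply: le_trans heavy_r; lra.
have [b_big|b_small] := lerP (x / 4) b; first by apply: le_trans heavy_c; lra.
have c_ge0 : 0 <= lam / (4 * Num.sqrt d) by rewrite divr_ge0 ?mulr_ge0 ?sqrtr_ge0.
have N_gap : 0 <= N - x / 4 by rewrite subr_ge0; lra.
have := mulr_ge0 N_gap c_ge0; rewrite /y in min_le_y => light_gap.
apply: le_trans light; lra.
Qed.

End Projection.

End ZeroOneMatrix.

Lemma pdisc_ge_min (R : realType) n r (M : 'M[R]_n) :
  (0 < r)%N -> (forall i j, M i j = 0 \/ M i j = 1) -> (\rank M <= r)%N ->
  mass M / n%:R <= n%:R / 2 ->
  let d := mass M / n%:R in
  Num.min (d * n%:R) (Num.sqrt d * (n%:R * Num.sqrt n%:R) / Num.sqrt r%:R) / 64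
  <= pdisc M.
Proof.
move=> r_gt0 M01 rkM d_le_half /=; set d := mass M / n%:R in d_le_half *.
have d_ge0 : 0 <= d := avg_deg_ge0 M01.
have [d_eq0|d_neq0] := eqVneq d 0.
  by rewrite d_eq0 sqrtr0 !mul0r minxx mul0r; exact: pdisc_ge0.
have n_gt0 : 0 < n%:R :> R.
  by rewrite lt0r ler0n andbT; apply: contra d_neq0 => /eqP n0; rewrite /d n0 invr0 mulr0.
have p_half : density M <= 1 / 2.
  by rewrite -(ler_pM2r n_gt0) density_mul_n // -/d; lra.
have [P [P_sym P_idem trP P_fix]] := row_space_projector (centered M).
set sr : R := Num.sqrt r%:R; set sn : R := Num.sqrt n%:R; set sd := Num.sqrt d.
have sr_gt0 : 0 < sr by rewrite sqrtr_gt0 ltr0n.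
have sd_gt0 : 0 < sd by rewrite sqrtr_gt0 lt0r d_neq0.
pose lam := sn / (4 * sr).
have lam_ge0 : 0 <= lam by rewrite divr_ge0 ?sqrtr_ge0 // mulr_ge0 // ltW.
have few_spiky : \sum_j ((1 < lam ^+ 2 * P j j)%R%:R : R) <= n%:R / 8.
  apply: le_trans (spiky_count P_sym P_idem lam) _.
  have -> : lam ^+ 2 = n%:R / (16 * r%:R).
    by rewrite expr_div_n exprMn !sqr_sqrtr ?ler0n // -natrX.
  have trP_le : \tr P <= 2 * r%:R.
    rewrite trP -natrM ler_nat (leq_trans (mxrank_sub_const _ _)) //.
    by rewrite mul2n -addnn -add1n leq_add.
  have -> : n%:R / 8 = n%:R / (16 * r%:R) * (2 * r%:R) :> R.
    by field; rewrite pnatr_eq0 -lt0n.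
  by rewrite ler_wpM2l // divr_ge0 ?mulr_ge0 ?ler0n.
have := pdisc_ge_heavy_or_light M01 p_half P_sym P_idem P_fix lam_ge0 few_spiky.
rewrite -/d -/sd (_ : d * n%:R * lam / (4 * sd) = sd * (n%:R * sn) / sr / 16); last first.
  by rewrite /lam -[d](sqr_sqrtr d_ge0) -/sd; field; rewrite !gt_eqF.
apply: le_trans; have -> : 64 = 16 * 4 :> R by rewrite -natrM.
rewrite invfM (mulrA (Num.min _ _)) ler_pM2r ?invr_gt0 //.
by apply: min_divr_le; [exact: mulr_ge0 d_ge0 (ltW n_gt0) | rewrite ler1n].
Qed.

Theorem lemma3p4 :
  exists c : rat, 0 < c /\
  forall (R : realType) (n r : nat) (M : 'M[R]_n),
    (0 < r)%N ->
    (forall i j, M i j = 0 \/ M i j = 1) ->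
    (\rank M <= r)%N ->
    mass M / n%:R <= n%:R / 2 ->
    let d := mass M / n%:R in
    ratr c * Num.min (d * n%:R)
                (Num.sqrt d * (n%:R * Num.sqrt n%:R) / Num.sqrt r%:R)
      <= pdisc M.
Proof.
exists (1 / 64); split; first by rewrite divr_gt0 ?ltr01 ?ltr0n.
move=> R n r M r_gt0 M01 rkM d_le_half /=.
rewrite fmorph_div rmorph1 rmorph_nat mul1r mulrC.
exact: (pdisc_ge_min r_gt0 M01 rkM d_le_half).
Qed.
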